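(* Let $G$ be a nonempty oriented Burling graph. Then $G$ has a full in-star cutset, or $G$ is an oriented chandelier, or $G$ contains a vertex of degree at most $1$.
   Context: Graphs are finite, without loops or multiple edges; oriented graphs have no pair of opposite arcs; words such as degree, neighbor, connected, when applied to an oriented graph, refer to its underlying graph. In a rooted tree $T$ with root $r$, each non-root vertex $v$ has a parent $p(v)$; children, leaves, ancestors and descendants are as usual (every vertex is an ancestor and a descendant of itself). A branch is a sequence $v_1 v_2\dots v_k$ ($k\ge 0$) of vertices such that $v_i$ is the parent of $v_{i+1}$ for all $i<k$; it starts at $v_1$. A Burling tree is a 4-tuple $(T,r,\ell,c)$ where $T$ is a rooted tree with root $r$; $\ell$ assigns to each non-leaf vertex $v$ one of its children $\ell(v)$, called the last-born of $v$; and $c$ assigns to every vertex $v$ that is neither the root nor a last-born the vertex-set of a (possibly empty) branch of $T$ starting at $\ell(p(v))$, while $c(v)=\emptyset$ if $v$ is the root or a last-born. The oriented graph fully derived from $(T,r,\ell,c)$ has vertex-set $V(T)$ and an arc $uv$ if and only if $v\in c(u)$. An oriented graph is derived from a Burling tree if it is an induced subgraph of the oriented graph fully derived from it; an oriented Burling graph is an oriented graph derived from some Burling tree. For a vertex $v$, $N^-(v)$ is its set of in-neighbors and $N^-[v]=N^-(v)\cup\{v\}$. A full in-star cutset of an oriented graph $G$ is a set $N^-[v]$, for some $v\in V(G)$, such that $G\setminus N^-[v]$ is disconnected. An in-tree is an oriented graph obtained from a rooted tree by orienting every edge towards the root; a leaf of an in-tree is a source with exactly one out-neighbor. An oriented chandelier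 is an oriented graph obtained from an in-tree $G'$ with at least two leaves by adding a new vertex $v$ and all arcs $uv$ where $u$ is a leaf of $G'$. *)

From mathcomp Require Import all_boot.
Set Implicit Arguments. Unset Strict Implicit. Unset Printing Implicit Defensive.

(* An oriented graph on a finite vertex type V is given by its arc relation
   a : rel V (a x y means there is an arc x -> y). *)
Section Defs.

Variable V : finType.

Definition oriented (a : rel V) : Prop :=
  forall x y, ~~ a x x /\ ~~ (a x y && a y x).

Definition uadj (a : rel V) (x y : V) : bool := a x y || a y x.

Definition udeg (a : rel V) (v : V) : nat := #|[set u | uadj a v u]|.

Definition in_nbhd_closed (a : rel V) (v : V) : {set V} :=
  v |: [set u | a u v].

Definition disconnected_on (a : rel V) (S : {set V}) : Prop :=
  exists x y, [/\ x \in S, y \in S &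
    ~~ connect [rel u w | [&& u \in S, w \in S & uadj a u w]] x y].

Definition has_full_in_star_cutset (a : rel V) : Prop :=
  exists v, disconnected_on a (~: in_nbhd_closed a v).

Definition is_rooted_tree (S : {set V}) (r : V) (par : V -> option V) : Prop :=
  [/\ r \in S, par r = None,
      (forall v, v \in S -> v != r -> exists2 u, u \in S & par v = Some u)
    & (forall v, v \in S -> exists n, iter n (obind par) (Some v) = Some r)].

(* leaf of the in-tree (S, a restricted to S): a source with exactly one
   out-neighbour *)
Definition intree_leaf (a : rel V) (S : {set V}) (u : V) : bool :=
  [&& u \in S, [forall w, (w \in S) ==> ~~ a w u] &
      #|[set w in S | a u w]| == 1].

(* G is an oriented chandelier: there is a vertex v such that G - v is an
   in-tree G' (a rooted tree on V \ {v} with every edge oriented from child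
   to parent, i.e. towards the root) with at least two leaves, and the arcs
   at v are exactly the arcs u -> v for u a leaf of G'. *)
Definition is_oriented_chandelier (a : rel V) : Prop :=
  exists v rt (par : V -> option V),
    let S := [set~ v] in
    [/\ is_rooted_tree S rt par,
        (forall x y, x \in S -> y \in S -> a x y = (par x == Some y)),
        2 <= #|[set u | intree_leaf a S u]|,
        (forall u, a v u = false)
      & (forall u, u \in S -> a u v = intree_leaf a S u)].

End Defs.

Section Burling.
Variable W : finType.

Definition child_rel (par : W -> option W) : rel W :=
  fun x y => par y == Some x.

Definition is_leaf (par : W -> option W) (v : W) : bool :=
  [forall w, par w != Some v].

Definition is_last_born (par : W -> option W) (ell : W -> W) (v : W) : bool :=
  [exists w, ~~ is_leaf par w && (ell w == v)].

Definition burling_tree (r : W) (par : W -> option W) (ell : W -> W)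
    (c : W -> {set W}) : Prop :=
  [/\ is_rooted_tree [set: W] r par,
      (forall v, ~~ is_leaf par v -> par (ell v) = Some v),
      (forall v, (v == r) || is_last_born par ell v -> c v = set0)
    &
      (forall v pv, par v = Some pv -> ~~ is_last_born par ell v ->
         c v = set0 \/
         exists s : seq W, path (child_rel par) (ell pv) s /\
                           c v = [set x in ell pv :: s])].
End Burling.

(* G = (V, a) is derived from a Burling tree: it is (isomorphic to) an induced
   subgraph of the oriented graph fully derived from it (arc u -> v iff
   v \in c u). *)
Definition oriented_burling_graph (V : finType) (a : rel V) : Prop :=
  exists (W : finType) (r : W) par ell c,
    burling_tree r par ell c /\
    exists f : V -> W, injective f /\ forall x y, a x y = (f y \in c (f x)).

From mathcomp Require Import all_boot zify.
From Stdlib Require Import Classical.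
Set Implicit Arguments. Unset Strict Implicit. Unset Printing Implicit Defensive.

(* Embed G into its Burling tree T.  An arc u -> x goes from u into an interval
   [ell p, t] of the ancestor order of T, where ell p is a sibling of u.  Hence
   arcs join incomparable vertices, depth never decreases along an arc (and stays
   constant only into a sink), out-neighbourhoods are chains, and the proper
   descendants of a vertex y form a union of components of G - N^-[y].
   Without full in-star cutset, a vertex y with a proper descendant therefore
   receives an arc from each of its non-descendants, and there is at most one
   such y.  If there is none, out-degrees are at most one and a source has
   degree at most one.  Otherwise y is a sink, every other vertex has exactly
   one out-neighbour besides y, and these out-neighbours make G - y an in-tree
   whose leaves are exactly the in-neighbours of y. *)

Lemma connect_invariant (T : finType) (e : rel T) (P : T -> Prop) :
  (forall x y, e x y -> P x -> P y) -> forall x y, connect e x y -> P x -> P y.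
Proof.
move=> hP x _ /connectP [p hp ->]; elim: p x hp => //= z p IH x /andP [hxz hp] hx.
exact: IH hp (hP _ _ hxz hx).
Qed.

Section Ancestry.
Variables (T : finType) (par : T -> option T).

Definition ancestor (x y : T) : Prop :=
  exists k, iter k (obind par) (Some y) = Some x.

Lemma iter_obind_None n : iter n (obind par) None = None.
Proof. by elim: n => //= n ->. Qed.

Lemma ancestor_refl x : ancestor x x.
Proof. by exists 0. Qed.

Lemma ancestor_trans x y z : ancestor x y -> ancestor y z -> ancestor x z.
Proof. by move=> [k hk] [j hj]; exists (k + j); rewrite iterD hj. Qed.

Lemma ancestor_parent x p : par x = Some p -> ancestor p x.
Proof. by exists 1. Qed.

Lemma ancestor_parentP x y p :
  ancestor x y -> par y = Some p -> x = y \/ ancestor x p.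
Proof.
move=> [[|k] hk] hp; first by case: hk; left.
by right; exists k; rewrite iterSr /= hp in hk.
Qed.

Lemma ancestors_comparable x y z :
  ancestor x z -> ancestor y z -> ancestor x y \/ ancestor y x.
Proof.
move=> [k hk] [j hj]; case: (leqP k j) => [le_kj|/ltnW le_jk].
  by right; exists (j - k); rewrite -hk -iterD subnK.
by left; exists (k - j); rewrite -hj -iterD subnK.
Qed.

Lemma iter_obind_stop_uniq x e m n :
  iter m (obind par) (Some x) = Some e -> par e = None ->
  iter n (obind par) (Some x) = Some e -> m = n.
Proof.
wlog le_mn : m n / m <= n => [hw|hm he].
  by case: (leqP m n) => [|/ltnW] h *; [apply: hw | symmetry; apply: hw].
rewrite -(subnK le_mn) iterD hm; case: (n - m) => [//|k].
by rewrite iterSr /= he iter_obind_None.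
Qed.

Lemma ancestor_parentless x y : par y = None -> ancestor x y -> x = y.
Proof. by move=> hy [[|k] hk]; [case: hk | rewrite iterSr /= hy iter_obind_None in hk]. Qed.

Lemma ancestor_image x y : ancestor x y -> x = y \/ exists z, par z = Some x.
Proof.
move=> [[|k] hk]; first by case: hk; left.
move: hk; rewrite iterS; case: (iter k _ _) => [z|] //= hz; by right; exists z.
Qed.

Definition rooted_at (r : T) : Prop := par r = None /\ forall x, ancestor r x.

Variable r : T.
Hypothesis rooted : rooted_at r.

Lemma reach_rootb x : exists n, iter n (obind par) (Some x) == Some r.
Proof. by have [n hn] := rooted.2 x; exists n; apply/eqP. Qed.

Definition depth x : nat := ex_minn (reach_rootb x).

Lemma depth_iter x y k :
  iter k (obind par) (Some y) = Some x -> depth y = depth x + k.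
Proof.
have iter_depth z : iter (depth z) (obind par) (Some z) = Some r.
  by rewrite /depth; case: ex_minnP => n /eqP.
move=> hk; apply: (iter_obind_stop_uniq (iter_depth y) rooted.1).
by rewrite iterD hk iter_depth.
Qed.

Lemma depth_parent x p : par x = Some p -> depth x = (depth p).+1.
Proof. by move=> hp; rewrite (@depth_iter p x 1) ?addn1 //= hp. Qed.

Lemma ancestor_depth x y : ancestor x y -> depth x <= depth y.
Proof. by move=> [k /depth_iter ->]; rewrite leq_addr. Qed.

Lemma ancestor_depth_eq x y : ancestor x y -> depth x = depth y -> x = y.
Proof.
move=> [k hk]; rewrite (depth_iter hk) -{1}[depth x]addn0 => /addnI k0.
by move: hk; rewrite -k0 => -[].
Qed.

Lemma not_ancestor_parent x p : par x = Some p -> ~ ancestor x p.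
Proof. by move=> hp /ancestor_depth; rewrite (depth_parent hp) ltnn. Qed.

Lemma siblings_not_ancestor x y p :
  par x = Some p -> par y = Some p -> x != y -> ~ ancestor x y.
Proof.
move=> hx hy xy hxy; case: (ancestor_parentP hxy hy) => [e|]; first by rewrite e eqxx in xy.
exact: not_ancestor_parent hx.
Qed.

Lemma ancestor_antisym x y : ancestor x y -> ancestor y x -> x = y.
Proof.
move=> hxy hyx; apply: (ancestor_depth_eq hxy).
by apply/eqP; rewrite eqn_leq (ancestor_depth hxy) (ancestor_depth hyx).
Qed.

Lemma mem_branch x s z : path (child_rel par) x s ->
  z \in x :: s <-> ancestor x z /\ ancestor z (last x s).
Proof.
elim: s x z => [|b s IH] x z /=.
  move=> _; rewrite inE; split => [/eqP ->|[hxz hzx]].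
    by split; apply: ancestor_refl.
  by rewrite (ancestor_antisym hzx hxz).
case/andP => /eqP hb hp; rewrite in_cons.
have [hb_b hb_last] := (IH b b hp).1 (mem_head _ _).
split=> [/orP [/eqP ->|/(IH b z hp) [hbz hzl]]|[hxz hzl]].
- by split; [apply: ancestor_refl | apply: ancestor_trans (ancestor_parent hb) hb_last].
- by split=> //; apply: ancestor_trans (ancestor_parent hb) hbz.
case: (eqVneq z x) => [-> //|zx]; apply/orP; right; apply/(IH b z hp); split=> //.
case: (ancestors_comparable hb_last hzl) => [//|hzb].
case: (ancestor_parentP hzb hb) => [->|hzx]; first exact: ancestor_refl.
by rewrite (ancestor_antisym hzx hxz) eqxx in zx.
Qed.

End Ancestry.

Section BurlingTree.
Variables (W : finType) (r : W) (par : W -> option W) (ell : W -> W).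
Variable c : W -> {set W}.
Hypothesis burling : burling_tree r par ell c.

Lemma burling_rooted : rooted_at par r.
Proof.
by case: burling => -[_ root_par _ reach] *; split=> // x; apply: reach (in_setT x).
Qed.

Local Notation depth := (depth burling_rooted).

Lemma c_last_born u p : par u = Some p -> c (ell p) = set0.
Proof.
case: burling => _ _ c_empty _ hp; apply/c_empty/orP; right.
by apply/existsP; exists p; rewrite eqxx andbT; apply/forallPn; exists u; rewrite hp eqxx.
Qed.

Lemma c_interval u x : x \in c u -> exists p t,
  [/\ par u = Some p, par (ell p) = Some p, ell p != u
    & forall z, z \in c u <-> ancestor par (ell p) z /\ ancestor par z t].
Proof.
case: burling => -[_ _ has_par _] ell_child c_empty c_branch hx.
have ur : u != r by apply: contraTneq hx => ->; rewrite c_empty ?eqxx ?in_set0.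
have [p _ hp] := has_par u (in_setT u) ur.
have p_nonleaf : ~~ is_leaf par p by apply/forallPn; exists u; rewrite hp eqxx.
have u_not_last : ~~ is_last_born par ell u.
  by apply: contraTN hx => hu; rewrite c_empty ?hu ?orbT ?in_set0.
have [hc|[s [hs hc]]] := c_branch u p hp u_not_last; first by rewrite hc in_set0 in hx.
exists p, (last (ell p) s); split=> //; first exact: ell_child.
  by apply: contraNneq u_not_last => <-; apply/existsP; exists p; rewrite p_nonleaf eqxx.
by move=> z; rewrite hc in_set; exact: (mem_branch burling_rooted).
Qed.

Section EmbeddedGraph.
Variables (V : finType) (a : rel V) (f : V -> W).
Hypothesis f_inj : injective f.
Hypothesis arcE : forall x y, a x y = (f y \in c (f x)).

Local Notation "x <=T y" := (ancestor par (f x) (f y)) (at level 70).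

Lemma arc_interval u x : a u x -> exists p t,
  [/\ par (f u) = Some p, par (ell p) = Some p, ell p != f u
    & forall z, a u z <-> ancestor par (ell p) (f z) /\ ancestor par (f z) t].
Proof.
rewrite arcE => /c_interval [p [t [hu he ne hc]]].
by exists p, t; split=> // z; rewrite arcE.
Qed.

Lemma arc_incomparable u x : a u x -> ~ u <=T x /\ ~ x <=T u.
Proof.
move=> hux; have [p [t [hu he ne /(_ x) [/(_ hux) [hex _] _]]]] := arc_interval hux.
have not_eu := siblings_not_ancestor burling_rooted he hu ne.
rewrite eq_sym in ne; have not_ue := siblings_not_ancestor burling_rooted hu he ne.
split=> [hux'|hxu]; last exact/not_eu/(ancestor_trans hex).
by case: (ancestors_comparable hux' hex).
Qed.

Lemma arc_descendant y u w : y <=T u -> u != y -> a u w -> y <=T w.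
Proof.
move=> hyu uy huw; have [p [t [hu he _ /(_ w) [/(_ huw) [hew _] _]]]] := arc_interval huw.
case: (ancestor_parentP hyu hu) => [/f_inj e|hyp]; first by rewrite e eqxx in uy.
exact: ancestor_trans hyp (ancestor_trans (ancestor_parent he) hew).
Qed.

Lemma in_arc_descendant y u w : y <=T u -> a w u -> ~~ a w y -> y <=T w.
Proof.
move=> hyu hwu; have [p [t [hw he _ hint]]] := arc_interval hwu.
have [heu hut] := (hint u).1 hwu.
have [hey|hye] := ancestors_comparable heu hyu.
  by rewrite (hint y).2 //; split=> //; apply: ancestor_trans hyu hut.
case: (ancestor_parentP hye he) => [e|hyp _]; last exact: ancestor_trans hyp (ancestor_parent hw).
by rewrite (hint y).2 // e; split; [apply: ancestor_refl | apply: ancestor_trans heu hut].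
Qed.

Lemma out_comparable x o1 o2 : a x o1 -> a x o2 -> o1 <=T o2 \/ o2 <=T o1.
Proof.
move=> h1 h2; have [p [t [_ _ _ hint]]] := arc_interval h1.
exact: ancestors_comparable ((hint o1).1 h1).2 ((hint o2).1 h2).2.
Qed.

Lemma arc_depth_le u x : a u x -> depth (f u) <= depth (f x).
Proof.
move=> hux; have [p [t [hu he _ /(_ x) [/(_ hux) [hex _] _]]]] := arc_interval hux.
rewrite (depth_parent burling_rooted hu) -(depth_parent burling_rooted he).
exact: (ancestor_depth burling_rooted hex).
Qed.

(* Equality forces [f x = ell p], a last-born, whose [c] is empty. *)
Lemma arc_depth_eq_sink u x w : a u x -> depth (f u) = depth (f x) -> a x w = false.
Proof.
move=> hux; have [p [t [hu he _ /(_ x) [/(_ hux) [hex _] _]]]] := arc_interval hux.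
rewrite (depth_parent burling_rooted hu) -(depth_parent burling_rooted he).
move=> /(ancestor_depth_eq hex) ex.
by rewrite arcE -ex (c_last_born hu) in_set0.
Qed.

Lemma exists_source : 0 < #|V| -> exists u, forall w, ~~ a w u.
Proof.
move=> /card_gt0P [x0 _].
have [x _ x_min] := arg_minnP (fun x => depth (f x)) (isT : predT x0).
have [[u hux]|no_in] := classic (exists u, a u x); last first.
  by exists x => w; apply/negP => hwx; apply: no_in; exists w.
exists u => w; apply/negP => hwu.
have flat : depth (f w) = depth (f u).
  by have := x_min w isT; have := arc_depth_le hwu; have := arc_depth_le hux; lia.
by rewrite (arc_depth_eq_sink x hwu flat) in hux.
Qed.

Lemma full_in_star_cutset y d o :
  d != y -> y <=T d -> ~ y <=T o -> ~~ a o y -> has_full_in_star_cutset a.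
Proof.
move=> dy hyd hyo oy; exists y.
set S := ~: in_nbhd_closed a y.
have inS z : (z \in S) = (z != y) && ~~ a z y by rewrite !inE negb_or.
exists d, o; split.
- by rewrite inS dy; apply/negP => /arc_incomparable [_].
- by rewrite inS oy andbT; apply: contra_not_neq hyo => ->; apply: ancestor_refl.
apply/negP => /connect_invariant hconn; apply: hyo (hconn (fun z => y <=T z) _ hyd) => x z.
case/and3P; rewrite !inS => /andP [xy _] /andP [_ zy] /orP [hxz|hzx] hyx.
  exact: arc_descendant hyx xy hxz.
exact: in_arc_descendant hyx hzx zy.
Qed.

Definition has_proper_descendant y : Prop := exists2 d, d != y & y <=T d.

(* Out-neighbourhoods are chains, hence here of size at most one. *)
Lemma udeg_le1_of_no_proper_descendant :
  0 < #|V| -> (forall y, ~ has_proper_descendant y) -> exists v, udeg a v <= 1.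
Proof.
move=> V_gt0 none.
have out_uniq x o1 o2 : a x o1 -> a x o2 -> o1 = o2.
  move=> h1 h2; case: (eqVneq o1 o2) => // ne.
  by case: (out_comparable h1 h2) => h;
    [case: (none o1); exists o2 | case: (none o2); exists o1]; rewrite // eq_sym.
have [u no_in] := exists_source V_gt0; exists u; apply/card_le1_eqP => w1 w2.
by rewrite !inE /uadj (negbTE (no_in w1)) (negbTE (no_in w2)) !orbF => /out_uniq h /h.
Qed.

Section NoCutset.
Hypothesis oriented_a : oriented a.
Hypothesis no_cutset : ~ has_full_in_star_cutset a.
Hypothesis udeg_gt1 : forall v, 1 < udeg a v.

Lemma arc_from_non_descendant y o :
  has_proper_descendant y -> ~ y <=T o -> a o y.
Proof.
move=> [d dy hyd] hyo; apply: contraT => oy.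
by case: no_cutset; apply: full_in_star_cutset dy hyd hyo oy.
Qed.

Lemma has_proper_descendant_uniq y1 y2 :
  has_proper_descendant y1 -> has_proper_descendant y2 -> y1 = y2.
Proof.
move=> h1 h2.
have [h12|n12] := classic (y1 <=T y2); have [h21|n21] := classic (y2 <=T y1).
- exact/f_inj/(ancestor_antisym burling_rooted).
- by case: (arc_incomparable (arc_from_non_descendant h2 n21)) => /(_ h12).
- by case: (arc_incomparable (arc_from_non_descendant h1 n12)) => /(_ h21).
have [_] := oriented_a y1 y2.
by rewrite (arc_from_non_descendant h1 n12) (arc_from_non_descendant h2 n21).
Qed.

(* [y] becomes the vertex of the chandelier joined to the leaves of the in-tree. *)
Section Center.
Variable y : V.
Hypothesis y_proper : has_proper_descendant y.

Lemma center_sink w : a y w = false.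
Proof.
apply/negP => hyw; have [hy _] := arc_incomparable hyw.
have [_] := oriented_a y w.
by rewrite hyw (arc_from_non_descendant y_proper hy).
Qed.

Lemma arc_to_centerP o : a o y <-> ~ y <=T o.
Proof. by split=> [/arc_incomparable [] //|]; apply: arc_from_non_descendant. Qed.

Lemma arc_head_descendant w u : a w u -> y <=T u.
Proof.
move=> hwu; apply: NNPP => hu.
have uy : u != y by apply: contra_not_neq hu => ->; apply: ancestor_refl.
have [hw|hw] := classic (y <=T w).
  have wy : w != y by apply: contraTneq hwu => ->; rewrite center_sink.
  exact/hu/(arc_descendant hw wy hwu).
have [huy|//] := out_comparable hwu ((arc_to_centerP w).2 hw).
have u_proper : has_proper_descendant u by exists y; rewrite // eq_sym.
by rewrite (has_proper_descendant_uniq u_proper y_proper) eqxx in uy.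
Qed.

Lemma out_neighbour_uniq x o1 o2 :
  a x o1 -> a x o2 -> o1 != y -> o2 != y -> o1 = o2.
Proof.
move=> h1 h2 o1y o2y; case: (eqVneq o1 o2) => // ne.
have : has_proper_descendant o1 \/ has_proper_descendant o2.
  by case: (out_comparable h1 h2) => h; [left; exists o2; rewrite // eq_sym | right; exists o1].
by case=> /has_proper_descendant_uniq/(_ y_proper) e; [move: o1y | move: o2y]; rewrite e eqxx.
Qed.

Lemma center_in_neighbour_out v : a v y -> exists2 w, w != y & a v w.
Proof.
move=> hvy; apply: NNPP => no_out; have hv := (arc_to_centerP v).1 hvy.
have nbr_center w : uadj a v w -> w = y.
  case/orP => [hvw|/arc_head_descendant //].
  by apply: NNPP => /eqP wy; apply: no_out; exists w.
have := udeg_gt1 v; rewrite ltnNge => /negP; apply; apply/card_le1_eqP => w1 w2.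
by rewrite !inE => /nbr_center -> /nbr_center ->.
Qed.

Lemma intree_leaf_center u : intree_leaf a [set~ y] u = a u y.
Proof.
have [->|uy] := eqVneq u y; first by rewrite center_sink /intree_leaf !inE eqxx.
apply/idP/idP => [/and3P [_ /forallP no_in /eqP out1]|huy].
  apply: contraT => nuy; have := udeg_gt1 u; rewrite ltnNge -out1 subset_leq_card //.
  apply/subsetP => z; rewrite !inE /uadj => /orP [huz|hzu].
    by rewrite huz andbT; apply: contraNneq nuy => <-.
  have [zy|zy] := eqVneq z y; first by rewrite zy center_sink in hzu.
  by have := no_in z; rewrite !inE zy hzu.
rewrite /intree_leaf !inE uy /=; apply/andP; split.
  apply/forallP => w; apply/implyP => _; apply/negP => /arc_head_descendant.
  exact: (arc_to_centerP u).1 huy.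
have [w wy huw] := center_in_neighbour_out huy.
apply/cards1P; exists w; apply/setP => z; rewrite !inE.
by apply/andP/eqP => [[zy huz]|->]; [apply: out_neighbour_uniq huz huw zy wy | rewrite wy huw].
Qed.

Definition next x : option V := [pick w | (w != y) && a x w].

Lemma nextP x w : next x = Some w <-> (w != y) && a x w.
Proof.
rewrite /next; case: pickP => [w' /andP [w'y hw']|no_out]; split=> [|/andP [wy hw]].
- by case=> <-; rewrite w'y.
- by rewrite (out_neighbour_uniq hw' hw w'y wy).
- by [].
- by have := no_out w; rewrite wy hw.
Qed.

Definition ends x e : Prop := ancestor next e x /\ next e = None.

Lemma ends_next x w e : next x = Some w -> ends x e <-> ends w e.
Proof.
move=> hx; split=> [[hex he]|[hew he]]; split=> //.
  by case: (ancestor_parentP hex hx) => // ex; rewrite ex hx in he.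
exact: ancestor_trans hew (ancestor_parent hx).
Qed.

Lemma next_depth x w : next x = Some w -> depth (f x) < depth (f w) \/ next w = None.
Proof.
move=> /nextP /andP [_ hxw]; have := arc_depth_le hxw.
rewrite leq_eqVlt => /orP [/eqP e|]; [right | by left].
by rewrite /next; case: pickP => // z /andP [_]; rewrite (arc_depth_eq_sink z hxw e).
Qed.

Lemma ends_exists x : exists e, ends x e.
Proof.
pose K := \max_z depth (f z).
have [n] := ubnP (K - depth (f x)); elim: n x => // n IH x hn.
case E: (next x) => [w|]; last by exists x; split=> //; apply: ancestor_refl.
have [lt|w_stop] := next_depth E.
  have w_le_K : depth (f w) <= K by exact: leq_bigmax.
  have [e he] := IH w (ltac:(lia)); exists e; exact/(ends_next e E).
by exists w; apply/(ends_next w E); split=> //; apply: ancestor_refl.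
Qed.

(* [D = G - N^-[y]] is connected and consists of proper descendants of [y], so
   its vertices share an end; every in-neighbour of [y] points into [D]. *)
Lemma common_end : exists2 rt, rt != y & forall v, v != y -> ends v rt.
Proof.
set D := ~: in_nbhd_closed a y.
have inD z : (z \in D) = (z != y) && ~~ a z y by rewrite !inE negb_or.
have [d0 d0y hyd0] := y_proper.
have d0D : d0 \in D by rewrite inD d0y; apply/negP => /arc_to_centerP.
have [rt [hrt rt_stop]] := ends_exists d0.
have endsD v : v \in D -> ends v rt.
  move=> vD; have conn : connect [rel u w | [&& u \in D, w \in D & uadj a u w]] d0 v.
    by apply: contraT => nc; case: no_cutset; exists y, d0, v.
  apply: (connect_invariant (P := fun v => ends v rt)) conn (conj hrt rt_stop).
  move=> u w /and3P []; rewrite !inD => /andP [uy _] /andP [wy _] /orP [huw|hwu].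
    have hu : next u = Some w by apply/nextP; rewrite wy huw.
    exact: (ends_next rt hu).1.
  have hw : next w = Some u by apply/nextP; rewrite uy hwu.
  exact: (ends_next rt hw).2.
exists rt.
  case: (ancestor_image hrt) => [->|[z /nextP /andP []]] //.
move=> v vy; have [hvy|nvy] := boolP (a v y); last by apply: endsD; rewrite inD vy.
have [w wy hvw] := center_in_neighbour_out hvy.
have hv : next v = Some w by apply/nextP; rewrite wy hvw.
apply/(ends_next rt hv)/endsD; rewrite inD wy; apply/negP => /arc_to_centerP; apply.
exact: arc_head_descendant hvw.
Qed.

Lemma center_chandelier : is_oriented_chandelier a.
Proof.
have [rt rty ends_rt] := common_end.
exists y, rt, next; split.
- split; rewrite ?inE //; first by case: (ends_rt rt rty).
    move=> v; rewrite !inE => vy vrt; have [hrv _] := ends_rt v vy.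
    case E: (next v) => [u|]; last by rewrite (ancestor_parentless E hrv) eqxx in vrt.
    by have /andP [uy _] := (nextP v u).1 E; exists u; rewrite ?inE.
  by move=> v; rewrite !inE => /ends_rt [].
- move=> x z _; rewrite !inE => zy.
  by apply/idP/eqP => [hxz|/nextP /andP [] //]; apply/nextP; rewrite zy.
- have -> : [set u | intree_leaf a [set~ y] u] = [set u | uadj a y u].
    by apply/setP => u; rewrite !inE intree_leaf_center /uadj center_sink.
  exact: udeg_gt1.
- exact: center_sink.
- by move=> u _; rewrite intree_leaf_center.
Qed.

End Center.
End NoCutset.

End EmbeddedGraph.
End BurlingTree.

Theorem theorem5p5 (V : finType) (a : rel V) :
  0 < #|V| -> oriented a -> oriented_burling_graph a ->
  has_full_in_star_cutset a \/ is_oriented_chandelier a \/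
  exists v : V, udeg a v <= 1.
Proof.
move=> V_gt0 oriented_a [W [r [par [ell [c [burling [f [f_inj arcE]]]]]]]].
have [[y y_proper]|none] := classic (exists y, has_proper_descendant par f y); last first.
  right; right; apply: (udeg_le1_of_no_proper_descendant burling arcE V_gt0) => y hy.
  by apply: none; exists y.
have [cutset|no_cutset] := classic (has_full_in_star_cutset a); first by left.
have [small|big] := classic (exists v, udeg a v <= 1); first by right; right.
have udeg_gt1 v : 1 < udeg a v by rewrite ltnNge; apply/negP => small; apply: big; exists v.
right; left.
exact: (center_chandelier burling f_inj arcE oriented_a no_cutset udeg_gt1 y_proper).
Qed.
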